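(* (i) Let $(D, \{ \prec_\alpha, \succ_\alpha \}_{\alpha \in \Omega}, \odot)$ be a tridendriform family algebra. Then $(D, \{ \prec_\alpha, \succ_\alpha, \curlyvee_{\alpha, \beta} \}_{\alpha, \beta \in \Omega})$ with $x \curlyvee_{\alpha, \beta} y = x \odot y$ for all $\alpha,\beta$ is an NS-family algebra. (ii) Let $A$ be an associative algebra and $\{ R_\alpha : A \to A \}_{\alpha \in \Omega}$ a Rota-Baxter family of weight $\lambda\in\mathbf{k}$. Then $(A, \{ \prec_\alpha, \succ_\alpha, \curlyvee_{\alpha, \beta} \}_{\alpha, \beta \in \Omega})$ is an NS-family algebra, where $a \prec_\alpha b = a \cdot R_\alpha (b)$, $a \succ_\alpha b = R_\alpha (a) \cdot b$ and $a \curlyvee_{\alpha, \beta} b = \lambda a \cdot b$.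
   Context: $\Omega$ is a semigroup. A tridendriform family algebra is a vector space $D$ with bilinear maps $\{\prec_\alpha,\succ_\alpha\}_{\alpha\in\Omega}$ and $\odot$ satisfying, for all $x,y,z$, $\alpha,\beta$: $( x \prec_\alpha y) \prec_\beta z = x \prec_{\alpha \beta} (y \prec_\beta z + y \succ_\alpha z + y \odot z)$; $(x \succ_\alpha y) \prec_\beta z = x \succ_\alpha (y \prec_\beta z)$; $(x \prec_\beta y + x \succ_\alpha y + x \odot y) \succ_{\alpha \beta} z = x \succ_\alpha (y \succ_\beta z)$; $(x \succ_\alpha y) \odot z = x \succ_\alpha (y \odot z)$; $(x \prec_\alpha y) \odot z = x \odot (y \succ_\alpha z)$; $(x \odot y) \prec_\alpha z = x \odot (y \prec_\alpha z)$; $(x \odot y) \odot z = x \odot (y \odot z)$. A Rota-Baxter family of weight $\lambda$: linear maps $R_\alpha$ with $R_\alpha (a) \cdot R_\beta (b) = R_{\alpha \beta} ( R_\alpha (a) \cdot b + a \cdot R_\beta (b) + \lambda a \cdot b )$. An NS-family algebra is a vector space $D$ with bilinear maps $\{ \prec_\alpha, \succ_\alpha, \curlyvee_{\alpha, \beta}\}_{\alpha, \beta \in \Omega}$ such that for all $x,y,z$, $\alpha,\beta,\gamma$: (1) $(x \prec_\alpha y) \prec_\beta z = x \prec_{\alpha \beta} ( y \prec_\beta z + y \succ_\alpha z + y \curlyvee_{\alpha, \beta} z)$; (2) $(x \succ_\alpha y) \prec_\beta z = x \succ_\alpha (y \prec_\beta z)$; (3) $(x \prec_\beta y + x \succ_\alpha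 y + x \curlyvee_{\alpha, \beta} y) \succ_{\alpha \beta} z = x \succ_\alpha (y \succ_\beta z)$; (4) $( x \prec_\beta y + x \succ_\alpha y + x \curlyvee_{\alpha, \beta} y ) \curlyvee_{\alpha \beta, \gamma} z + (x \curlyvee_{\alpha, \beta} y) \prec_\gamma z = x \succ_\alpha (y \curlyvee_{\beta, \gamma} z) + x \curlyvee_{\alpha, \beta \gamma} ( y \prec_\gamma z + y \succ_\beta z + y \curlyvee_{\beta, \gamma} z )$. *)

From mathcomp Require Import all_boot all_order all_algebra.
Set Implicit Arguments. Unset Strict Implicit. Unset Printing Implicit Defensive.
Import GRing.Theory.
Local Open Scope ring_scope.

Definition semigroup_law (Om : Type) (mul : Om -> Om -> Om) : Prop :=
  forall a b c, mul a (mul b c) = mul (mul a b) c.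

Definition bilinear_map (k : fieldType) (V : lmodType k) (f : V -> V -> V) : Prop :=
  (forall (c : k) x1 x2 y, f (c *: x1 + x2) y = c *: f x1 y + f x2 y) /\
  (forall (c : k) x y1 y2, f x (c *: y1 + y2) = c *: f x y1 + f x y2).

Definition tridendriform_family (k : fieldType) (Om : Type) (mul : Om -> Om -> Om)
  (D : lmodType k) (prec succ : Om -> D -> D -> D) (odot : D -> D -> D) : Prop :=
  (forall a, bilinear_map (prec a)) /\ (forall a, bilinear_map (succ a)) /\
  bilinear_map odot /\
  (forall x y z a b,
     prec b (prec a x y) z = prec (mul a b) x (prec b y z + succ a y z + odot y z)) /\
  (forall x y z a b, prec b (succ a x y) z = succ a x (prec b y z)) /\
  (forall x y z a b,
     succ (mul a b) (prec b x y + succ a x y + odot x y) z = succ a x (succ b y z)) /\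
  (forall x y z a, odot (succ a x y) z = succ a x (odot y z)) /\
  (forall x y z a, odot (prec a x y) z = odot x (succ a y z)) /\
  (forall x y z a, prec a (odot x y) z = odot x (prec a y z)) /\
  (forall x y z, odot (odot x y) z = odot x (odot y z)).

Definition NS_family (k : fieldType) (Om : Type) (mul : Om -> Om -> Om)
  (D : lmodType k) (prec succ : Om -> D -> D -> D) (vee : Om -> Om -> D -> D -> D) : Prop :=
  (forall a, bilinear_map (prec a)) /\ (forall a, bilinear_map (succ a)) /\
  (forall a b, bilinear_map (vee a b)) /\
  (forall x y z a b,
     prec b (prec a x y) z = prec (mul a b) x (prec b y z + succ a y z + vee a b y z)) /\
  (forall x y z a b, prec b (succ a x y) z = succ a x (prec b y z)) /\
  (forall x y z a b,
     succ (mul a b) (prec b x y + succ a x y + vee a b x y) z = succ a x (succ b y z)) /\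
  (forall x y z a b c,
     vee (mul a b) c (prec b x y + succ a x y + vee a b x y) z + prec c (vee a b x y) z
     = succ a x (vee b c y z) + vee a (mul b c) x (prec c y z + succ b y z + vee b c y z)).

Definition rota_baxter_family (k : fieldType) (Om : Type) (mul : Om -> Om -> Om)
  (A : algType k) (lam : k) (R : Om -> {linear A -> A}) : Prop :=
  forall a b (x y : A),
    R a x * R b y = R (mul a b) (R a x * y + x * R b y + lam *: (x * y)).

From mathcomp Require Import all_boot all_order all_algebra.
Set Implicit Arguments. Unset Strict Implicit. Unset Printing Implicit Defensive.
Local Open Scope ring_scope.
Import GRing.Theory.

(* Neither part uses associativity of the index semigroup. For (i), the mixed
   axiom (4) of an NS-family, with [x vee y = x odot y], splits after expanding
   by bilinearity into the four tridendriform axioms that involve [odot]. For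
   (ii), axioms (1) and (3) are the Rota-Baxter family identity multiplied by
   an element on the right, resp. left; (2) and (4) are associativity of A. *)

Section BilinearMapAdd.

Variables (k : fieldType) (V : lmodType k) (f : V -> V -> V).
Hypothesis f_bilinear : bilinear_map f.

Lemma bilinear_mapDl x1 x2 y : f (x1 + x2) y = f x1 y + f x2 y.
Proof. by case: f_bilinear => /(_ 1 x1 x2 y) + _; rewrite !scale1r. Qed.

Lemma bilinear_mapDr x y1 y2 : f x (y1 + y2) = f x y1 + f x y2.
Proof. by case: f_bilinear => _ /(_ 1 x y1 y2); rewrite !scale1r. Qed.

End BilinearMapAdd.

Lemma tridendriform_family_NS_family (k : fieldType) (Om : Type)
    (mul : Om -> Om -> Om) (D : lmodType k) (prec succ : Om -> D -> D -> D)
    (odot : D -> D -> D) :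
  tridendriform_family mul prec succ odot ->
  NS_family mul prec succ (fun _ _ => odot).
Proof.
move=> [prec_bil [succ_bil [odot_bil [precA [succ_precA [succA
  [odot_succA [odot_precA [prec_odotA odotA]]]]]]]]].
do 6 (split; first by []).
move=> x y z a b c.
rewrite !(bilinear_mapDl odot_bil) !(bilinear_mapDr odot_bil).
rewrite odot_succA odot_precA prec_odotA odotA.
by rewrite (ACl (2*(4*1*3))%AC).
Qed.

Section RotaBaxterFamily.

Variables (k : fieldType) (A : algType k).

Lemma bilinear_mul_linr (f : {linear A -> A}) :
  bilinear_map (fun x y : A => x * f y).
Proof.
split=> c x y z; first by rewrite mulrDl scalerAl.
by rewrite linearP mulrDr scalerAr.
Qed.

Lemma bilinear_mul_linl (f : {linear A -> A}) :
  bilinear_map (fun x y : A => f x * y).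
Proof.
split=> c x y z; first by rewrite linearP mulrDl scalerAl.
by rewrite mulrDr scalerAr.
Qed.

Lemma bilinear_scale_mul (lam : k) : bilinear_map (fun x y : A => lam *: (x * y)).
Proof.
split=> c x y z.
  by rewrite mulrDl scalerDr -scalerAl !scalerA mulrC.
by rewrite mulrDr scalerDr -scalerAr !scalerA mulrC.
Qed.

Lemma rota_baxter_family_NS_family (Om : Type) (mul : Om -> Om -> Om)
    (lam : k) (R : Om -> {linear A -> A}) :
  rota_baxter_family mul lam R ->
  NS_family mul (fun a (x y : A) => x * R a y) (fun a (x y : A) => R a x * y)
    (fun _ _ (x y : A) => lam *: (x * y)).
Proof.
move=> RB.
split=> [a|]; first exact: bilinear_mul_linr.
split=> [a|]; first exact: bilinear_mul_linl.
split=> [a b|]; first exact: bilinear_scale_mul.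
split=> [x y z a b /=|]; first by rewrite -mulrA RB [R a y * z + _]addrC.
split=> [x y z a b /=|]; first by rewrite mulrA.
split=> [x y z a b /=|]; first by rewrite mulrA RB [R a x * y + _]addrC.
move=> x y z a b c /=.
rewrite !mulrDl !mulrDr -!scalerAl -!scalerAr !scalerDr !mulrA.
by rewrite (ACl (2*(4*1*3))%AC).
Qed.

End RotaBaxterFamily.

Theorem proposition3p16 :
  (forall (k : fieldType) (Om : Type) (mul : Om -> Om -> Om) (D : lmodType k)
     (prec succ : Om -> D -> D -> D) (odot : D -> D -> D),
     semigroup_law mul ->
     tridendriform_family mul prec succ odot ->
     NS_family mul prec succ (fun _ _ x y => odot x y)) /\
  (forall (k : fieldType) (Om : Type) (mul : Om -> Om -> Om) (A : algType k)
     (lam : k) (R : Om -> {linear A -> A}),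
     semigroup_law mul ->
     rota_baxter_family mul lam R ->
     NS_family mul (fun a (x y : A) => x * R a y) (fun a (x y : A) => R a x * y)
       (fun _ _ (x y : A) => lam *: (x * y))).
Proof.
split=> k Om mul.
  by move=> D prec succ odot _; exact: tridendriform_family_NS_family.
by move=> A lam R _; exact: rota_baxter_family_NS_family.
Qed.
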